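(* Let $A\in\mathfrak g$ have characteristic polynomial equal to a power of an irreducible polynomial. Unless $\mathfrak g=\mathfrak o$ and the characteristic polynomial of $A$ is $x^n$, one has $Q_A\subseteq R_A$. In the remaining case ($\mathfrak g=\mathfrak o$, characteristic polynomial $x^n$), every $v\in Q_A$ still satisfies $\langle A^kv,v\rangle=0$ for all $k\ge1$.
   Context: $\mathbb{K}=\mathbb{F}$ or a quadratic extension of a field $\mathbb{F}$ of characteristic $\neq2$; $V$ an $n$-dimensional $\mathbb{K}$-space with a non-degenerate form which is symmetric ($\mathfrak g=\mathfrak o$), Hermitian ($\mathfrak g=\mathfrak u$) or symplectic ($\mathfrak g=\mathfrak{sp}$); $\mathfrak g=\{A:A^*=-A\}$. $\phi_v$ denotes $u\mapsto\langle u,v\rangle v$. For $A\in\mathfrak g$: $R_A=\{v\in V:\langle A^kv,v\rangle=0\ \forall k\ge0\}$; in the cases $\mathfrak u,\mathfrak{sp}$, $Q_A=\{v\in V:\phi_v\in[A,\mathfrak g]\}$, and in the case $\mathfrak o$, $Q_A=\{v\in V: A\phi_v+\phi_vA\in[A,\mathfrak g]\}$, where $[A,\mathfrak g]=\{AB-BA:B\in\mathfrak g\}$. *)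

From HB Require Import structures.
From mathcomp Require Import all_boot all_order all_algebra.
Set Implicit Arguments. Unset Strict Implicit. Unset Printing Implicit Defensive.
Import Order.TTheory GRing.Theory Num.Theory.
Local Open Scope ring_scope.

(* The form is <u,v> = u^T J sigma(v), sigma an involutive
   field automorphism of K (the identity in the symmetric/symplectic cases). *)

Inductive form_kind := Ortho | Unitary | Symplectic.

Definition sform (K : fieldType) (n : nat) (sigma : {rmorphism K -> K})
  (J : 'M[K]_n) (u v : 'cV[K]_n) : K :=
  (u^T *m J *m map_mx sigma v) 0 0.

Definition good_form (kind : form_kind) (K : fieldType) (n : nat)
  (sigma : {rmorphism K -> K}) (J : 'M[K]_n) : Prop :=
  (2%:R : K) != 0 /\ J \in unitmx /\
  match kind with
  | Ortho => (forall x, sigma x = x) /\ J^T = J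
  | Symplectic => (forall x, sigma x = x) /\ J^T = - J
  | Unitary => (forall x, sigma (sigma x) = x) /\ (exists x, sigma x != x)
               /\ J^T = map_mx sigma J
  end.

Definition in_g (K : fieldType) (n : nat) (sigma : {rmorphism K -> K})
  (J : 'M[K]_n) (A : 'M[K]_n) : Prop :=
  forall u v, sform sigma J (A *m u) v = - sform sigma J u (A *m v).

(* phi_v : u |-> <u,v> v ; as a matrix: column j is <e_j,v> v *)
Definition phi (K : fieldType) (n : nat) (sigma : {rmorphism K -> K})
  (J : 'M[K]_n) (v : 'cV[K]_n) : 'M[K]_n :=
  \matrix_(i < n, j < n) (sform sigma J (delta_mx j 0) v * v i 0).

Definition in_commutator (K : fieldType) (n : nat) (sigma : {rmorphism K -> K})
  (J : 'M[K]_n) (A M : 'M[K]_n) : Prop :=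
  exists B, in_g sigma J B /\ M = A *m B - B *m A.

Definition R_set (K : fieldType) (n : nat) (sigma : {rmorphism K -> K})
  (J : 'M[K]_n) (A : 'M[K]_n) (v : 'cV[K]_n) : Prop :=
  forall k : nat, sform sigma J ((A ^+ k) *m v) v = 0.

Definition Q_set (kind : form_kind) (K : fieldType) (n : nat)
  (sigma : {rmorphism K -> K}) (J : 'M[K]_n) (A : 'M[K]_n) (v : 'cV[K]_n) : Prop :=
  match kind with
  | Ortho => in_commutator sigma J A (A *m phi sigma J v + phi sigma J v *m A)
  | _ => in_commutator sigma J A (phi sigma J v)
  end.

From HB Require Import structures.
From mathcomp Require Import all_boot all_order all_algebra.
Import Order.TTheory GRing.Theory Num.Theory.
Local Open Scope ring_scope.

(* The rank-one map phi_v = v (J sigma(v))^T satisfies the trace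
   identity  tr (phi_v X) = <X v, v>.  A commutator [A, B] is orthogonal for
   the trace pairing to every power of A, since tr ([A, B] A^k) = 0.  Hence:
   - for u and sp, phi_v = [A, B] gives <A^k v, v> = 0 for every k;
   - for o, A phi_v + phi_v A = [A, B] gives 2 <A^(k+1) v, v> = 0 for every k,
     so <A^k v, v> = 0 for k >= 1 because char K <> 2.
   It remains, in case o, to obtain k = 0 when char_poly A <> X^n.  Since
   char_poly A is a power of an irreducible polynomial, it is X^n as soon as
   its constant term vanishes; otherwise Cayley-Hamilton writes 1 as a
   polynomial in A without constant term, and the vanishing of the trace
   pairing of phi_v against all positive powers of A forces <v, v> = 0. *)

Section RankOneTrace.
Context {K : fieldType} {n : nat} (sigma : {rmorphism K -> K}) (J : 'M[K]_n).

Lemma phi_mxE (v : 'cV[K]_n) : phi sigma J v = v *m (J *m map_mx sigma v)^T.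
Proof.
apply/matrixP => i j; rewrite !mxE big_ord1 !mxE mulrC; congr (_ * _).
rewrite /sform -mulmxA mxE (bigD1 j) //= big1 ?addr0; first by rewrite !mxE eqxx mul1r.
by move=> k /negbTE neq_kj; rewrite !mxE neq_kj mul0r.
Qed.

Lemma trace_phi (v : 'cV[K]_n) (X : 'M[K]_n) :
  \tr (phi sigma J v *m X) = sform sigma J (X *m v) v.
Proof.
rewrite phi_mxE -mulmxA mxtrace_mulC /sform -!mulmxA.
have tr1 (M : 'M[K]_1) : \tr M = M^T 0 0 by rewrite /mxtrace big_ord1 mxE.
by rewrite tr1 trmx_mul trmxK.
Qed.

End RankOneTrace.

Lemma trace_commutator_powers {K : fieldType} {n : nat} (A B : 'M[K]_n) (k : nat) :
  \tr ((A *m B - B *m A) *m A ^+ k) = 0.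
Proof.
rewrite mulmxBl linearB /= -mulmxA mxtrace_mulC -mulmxA.
have -> : A ^+ k *m A = A *m A ^+ k by rewrite -[LHS]/(A ^+ k * A) -exprSr exprS.
by rewrite mulmxA subrr.
Qed.

Lemma trace_anticommutator_powers {K : fieldType} {n : nat} (A B M : 'M[K]_n) :
  (2%:R : K) != 0 -> A *m M + M *m A = A *m B - B *m A ->
  forall k, \tr (M *m A ^+ k.+1) = 0.
Proof.
move=> two_neq0 anticomm k; apply/eqP.
have := trace_commutator_powers A B k; rewrite -anticomm mulmxDl linearD /=.
rewrite -mulmxA mxtrace_mulC -!mulmxA.
have -> : A ^+ k *m A = A ^+ k.+1 by rewrite -[LHS]/(A ^+ k * A) -exprSr.
have -> : A *m A ^+ k = A ^+ k.+1 by rewrite -[LHS]/(A * A ^+ k) -exprS.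
by move/eqP; rewrite -mulr2n -mulr_natr mulf_eq0 (negbTE two_neq0) orbF.
Qed.

(* If M is trace-orthogonal to all positive powers of A and char_poly A has a
   nonzero constant term, then tr M = 0: by Cayley-Hamilton, 1 is a linear
   combination of positive powers of A. *)
Lemma trace_zero_of_positive_powers {K : fieldType} {n : nat} (A M : 'M[K]_n) :
  (char_poly A)`_0 != 0 -> (forall k, \tr (M *m A ^+ k.+1) = 0) -> \tr M = 0.
Proof.
case: n A M => [|n] A M c0_neq0 orthM; first by rewrite /mxtrace big_ord0.
have CH := Cayley_Hamilton A.
rewrite -(coefK (char_poly A)) poly_def rmorph_sum /= in CH.
have : \tr (M *m \sum_(i < size (char_poly A))
                   horner_mx A ((char_poly A)`_i *: 'X^i)) = 0.
  by rewrite CH mulmx0 linear0.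
rewrite mulmx_sumr raddf_sum /= size_char_poly big_ord_recl /= big1 ?addr0.
  rewrite linearZ /= rmorphXn /= expr0 -scalemxAr linearZ /= mulmx1 => /eqP.
  by rewrite mulf_eq0 (negbTE c0_neq0) => /eqP.
move=> i _; rewrite linearZ /= rmorphXn /= horner_mx_X -scalemxAr linearZ /=.
by rewrite orthM mulr0.
Qed.

(* A power of an irreducible polynomial with a root at 0 is associate to a
   power of X; for a monic polynomial of size n.+1 this means it is X^n. *)
Lemma monic_irreducible_power_root0 {K : fieldType} {n : nat} (q p : {poly K})
  (m : nat) :
  irreducible_poly p -> q = p ^+ m -> q \is monic -> size q = n.+1 ->
  q`_0 = 0 -> q = 'X^n.
Proof.
move=> p_irr q_pm q_monic size_q q0.
have p0 : root p 0.
  apply: contraT => p0_neq0.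
  by move/eqP: q0; rewrite -horner_coef0 q_pm horner_exp (negbTE (expf_neq0 m p0_neq0)).
have X_p : 'X %= p.
  apply: p_irr.2; first by rewrite size_polyX.
  by rewrite -(subr0 'X) -polyC0 -root_factor_theorem.
have /eqP q_Xm : 'X^m == q.
  by rewrite -eqp_monic ?monicXn // q_pm eqp_exp.
by move: size_q; rewrite -q_Xm size_polyXn => -[->].
Qed.

Theorem theorem8p3 (kind : form_kind) (K : fieldType) (n : nat)
  (sigma : {rmorphism K -> K}) (J : 'M[K]_n) (A : 'M[K]_n)
  (hform : good_form kind sigma J) (hA : in_g sigma J A)
  (p : {poly K}) (m : nat) (hp : irreducible_poly p)
  (hchar : char_poly A = p ^+ m) :
  (~ (kind = Ortho /\ char_poly A = 'X^n) ->
     forall v : 'cV[K]_n, Q_set kind sigma J A v -> R_set sigma J A v) /\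
  (kind = Ortho -> char_poly A = 'X^n ->
     forall v : 'cV[K]_n, Q_set kind sigma J A v ->
       forall k : nat, (1 <= k)%N -> sform sigma J ((A ^+ k) *m v) v = 0).
Proof.
have two_neq0 : (2%:R : K) != 0 by case: hform.
have ortho_pos v : Q_set Ortho sigma J A v ->
    forall k, sform sigma J (A ^+ k.+1 *m v) v = 0.
  move=> [B [_ anticomm]] k; rewrite -trace_phi.
  exact: trace_anticommutator_powers two_neq0 anticomm k.
have commutator_R v : in_commutator sigma J A (phi sigma J v) -> R_set sigma J A v.
  by move=> [B [_ comm]] k; rewrite -trace_phi comm trace_commutator_powers.
split; last by move=> -> _ v hQ [|k] // _; apply: ortho_pos.
move=> not_exceptional v; case: kind hform not_exceptional => _ not_exceptional hQ;
  try exact: commutator_R.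
have c0_neq0 : (char_poly A)`_0 != 0.
  apply: contra_notN (fun X_n => not_exceptional (conj erefl X_n)) => /eqP c0.
  exact: monic_irreducible_power_root0 hp hchar (char_poly_monic A)
    (size_char_poly A) c0.
case=> [|k]; last exact: ortho_pos.
rewrite mul1mx -[v in sform _ _ v]mul1mx -trace_phi mulmx1.
apply: trace_zero_of_positive_powers c0_neq0 _ => k.
by rewrite trace_phi ortho_pos.
Qed.
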